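(* Define $F:\mathbb{N}\to\mathbb{N}$ by $F(n)=(n-1)/3$ if $n\equiv1\pmod 3$; $F(n)=n/2$ if $n\equiv 0$ or $n\equiv2\pmod 6$; $F(n)=(3n+1)/2$ if $n\equiv3$ or $n\equiv5\pmod6$. Then for every $n\in\mathbb{N}^+$ there exists $k\in\mathbb{N}$ with $F^k(n)=1$.
   Context: $F^k$ denotes the $k$-fold iterate of $F$. *)

From mathcomp Require Import all_boot.

Definition F (n : nat) : nat :=
  if n %% 3 == 1 then (n - 1) %/ 3
  else if (n %% 6 == 0) || (n %% 6 == 2) then n %/ 2
  else (3 * n + 1) %/ 2.

From mathcomp Require Import all_boot.
From mathcomp Require Import zify.

Set Implicit Arguments.
Unset Strict Implicit.

(* It suffices to show that every n > 1 has a positive iterate smaller than n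
   (a descent principle valid for any map, [reach_one_of_descent]).  For
   n = 1 mod 3 or n even this takes one step.  For the remaining odd n write
   n + 1 = 2^(a+1) v with v odd.  Each odd step multiplies n + 1 by 3/2, so
   a + 1 steps lead to 3^(a+1) v - 1 ([iter_F_ascent]); this number is
   2 mod 6, so one halving step gives w with 2w + 1 = 3^(a+1) v; from there
   every step is a division step w |-> (w - 1)/3 that divides 2w + 1 by 3
   ([iter_F_descent]), and after a steps we are at (3v - 1)/2, which lies
   strictly between 0 and n. *)

(* The three branches of F, in multiplicative form to avoid truncation. *)
Lemma F_third n : n %% 3 = 1 -> 3 * F n + 1 = n.
Proof. by move=> n3; rewrite /F n3 eqxx; lia. Qed.

Lemma F_half n : n %% 3 != 1 -> ~~ odd n -> 2 * F n = n.
Proof.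
move=> /negbTE n3 n_even; rewrite /F n3.
have n2 : n %% 2 = 0 by rewrite modn2 (negbTE n_even).
have -> : (n %% 6 == 0) || (n %% 6 == 2) by apply/orP; lia.
lia.
Qed.

Lemma F_up n : n %% 3 != 1 -> odd n -> 2 * F n = 3 * n + 1.
Proof.
move=> /negbTE n3 n_odd; rewrite /F n3.
have n2 : n %% 2 = 1 by rewrite modn2 n_odd.
have -> : ((n %% 6 == 0) || (n %% 6 == 2)) = false.
  by apply/negbTE/negP => /orP[] /eqP; lia.
lia.
Qed.

(* Ascent: starting from m = 2^a u - 1 (not 1 mod 3), each step turns a
   factor 2 of m + 1 into a factor 3; all later values are 2 mod 3. *)
Lemma iter_F_ascent a u : 0 < u -> (2 ^ a * u - 1) %% 3 != 1 ->
  iter a F (2 ^ a * u - 1) = 3 ^ a * u - 1.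
Proof.
elim: a u => [|a IH] u u_gt0 n3; first by rewrite !expn0.
have pos : 0 < 2 ^ a * u by rewrite muln_gt0 expn_gt0 u_gt0.
have step : F (2 ^ a.+1 * u - 1) = 2 ^ a * (3 * u) - 1.
  have m_odd : odd (2 ^ a.+1 * u - 1).
    by rewrite oddB ?muln_gt0 ?expn_gt0 ?u_gt0 // oddM oddX.
  by have := F_up n3 m_odd; rewrite expnS -mulnA mulnCA; lia.
rewrite iterSr step IH ?muln_gt0 ?u_gt0 //; last by apply/eqP; lia.
by rewrite expnS mulnCA mulnA.
Qed.

(* Descent: while 2w + 1 is divisible by 3, w is 1 mod 3 and F divides
   2w + 1 by 3. *)
Lemma iter_F_descent j w v : 2 * w + 1 = 3 ^ j * v -> 2 * iter j F w + 1 = v.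
Proof.
elim: j w => [|j IH] w; first by rewrite expn0 mul1n.
move=> e; rewrite iterSr; apply: IH.
have := @F_third w; rewrite expnS -mulnA in e; lia.
Qed.

Lemma iter_F_odd_case a v : odd v -> (2 ^ a.+1 * v - 1) %% 3 != 1 ->
  2 * iter (a + (1 + a.+1)) F (2 ^ a.+1 * v - 1) + 1 = 3 * v.
Proof.
move=> v_odd n3; have v_gt0 := odd_gt0 v_odd.
rewrite !iterD iter_F_ascent //= -/(3 ^ a.+1 * v); set R := 3 ^ a.+1 * v.
have R_odd : odd R by rewrite oddM oddX v_odd orbT.
have R3 : R %% 3 = 0 by rewrite /R expnS -mulnA modnMr.
have R_gt0 : 0 < R by rewrite muln_gt0 expn_gt0.
have top : 2 * F (R - 1) + 1 = R.
  have R1_3 : (R - 1) %% 3 != 1 by apply/eqP; lia.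
  have R1_even : ~~ odd (R - 1) by rewrite oddB // R_odd.
  by have := F_half R1_3 R1_even; lia.
by apply: iter_F_descent; rewrite top /R expnS -mulnA mulnCA.
Qed.

Lemma F_descent n : 1 < n -> exists k, 0 < iter k F n < n.
Proof.
move=> n_gt1.
have [n3|n3] := eqVneq (n %% 3) 1.
  by exists 1; have := F_third n3; rewrite /=; lia.
have [n_odd|n_even] := boolP (odd n); last first.
  by exists 1; have := F_half n3 n_even; rewrite /=; lia.
have [v v_odd def_n1] := pfactor_coprime (isT : prime 2) (ltn0Sn n).
rewrite coprime2n in v_odd; set a := logn 2 n.+1 in def_n1.
have v_gt0 := odd_gt0 v_odd.
case: a def_n1 => [|a] def_n1.
  by move: def_n1 n_odd v_odd; rewrite expn0 muln1 => <- /= ->.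
have def_n : n = 2 ^ a.+1 * v - 1 by rewrite mulnC -def_n1 subn1.
have pow : 2 <= 2 ^ a.+1 by rewrite expnS leq_pmulr ?expn_gt0.
rewrite def_n in n3; have orbit := iter_F_odd_case v_odd n3.
rewrite -def_n in orbit.
have : 2 * v <= 2 ^ a.+1 * v by rewrite leq_mul2r pow orbT.
by exists (a + (1 + a.+1)); lia.
Qed.

Lemma reach_one_of_descent (f : nat -> nat) :
  (forall n, 1 < n -> exists k, 0 < iter k f n < n) ->
  forall n, 0 < n -> exists k, iter k f n = 1.
Proof.
move=> desc n; elim/ltn_ind: n => n IH n_gt0.
have [n_gt1|n_le1] := ltnP 1 n; last by exists 0; apply/eqP; rewrite eqn_leq n_le1.
have [k1 /andP[pos lt]] := desc n n_gt1.
have [k2 e] := IH _ lt pos.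
by exists (k2 + k1); rewrite iterD.
Qed.

Theorem mainTheorem10 : forall n : nat, 0 < n -> exists k : nat, iter k F n = 1.
Proof. exact: reach_one_of_descent F_descent. Qed.
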